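(* Let $G$ be a simple, undirected, connected graph on $N>2$ vertices with edge set $E$ and degree sequence $d_1\le d_2\le\cdots\le d_N$. Then $$R^+(G)\ge 2N(N-1)-\frac{4|E|}{1+d_1}.$$
   Context: For vertices $i,j$ of $G$, $R_{ij}$ denotes the effective resistance between $i$ and $j$ when every edge of $G$ is a unit resistor. The additive degree-Kirchhoff index is $R^+(G)=\sum_{i<j}(d_i+d_j)R_{ij}$, where $d_i$ is the degree of vertex $i$. *)

From HB Require Import structures.
From mathcomp Require Import all_boot all_order all_algebra.
Set Implicit Arguments. Unset Strict Implicit. Unset Printing Implicit Defensive.
Import Order.TTheory GRing.Theory Num.Theory.

Definition simple_graph N (e : rel 'I_N) : Prop :=
  symmetric e /\ irreflexive e.

Definition connected_graph N (e : rel 'I_N) : Prop :=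
  forall i j : 'I_N, connect e i j.

Definition deg N (e : rel 'I_N) (i : 'I_N) : nat := #|[set j | e i j]|.

Definition mindeg N (e : rel 'I_N) : nat := \big[minn/N]_(i < N) deg e i.

Definition nedges N (e : rel 'I_N) : nat :=
  #|[set p : 'I_N * 'I_N | (p.1 < p.2)%N && e p.1 p.2]|.

Local Open Scope ring_scope.

Definition laplacian (R : pzRingType) N (e : rel 'I_N) : 'M[R]_N :=
  \matrix_(i, j) (if i == j then (deg e i)%:R else - (e i j)%:R).

(* current vector: unit current injected at i and extracted at j *)
Definition curvec (R : pzRingType) N (i j : 'I_N) : 'cV[R]_N :=
  \col_k ((k == i)%:R - (k == j)%:R).

(* Node potentials v solving Kirchhoff's equations L v = e_i - e_j
   (normalized so that sum v = 0): for a connected graph, L + J is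
   invertible (J = all-ones matrix) and v = (L + J)^{-1} (e_i - e_j). *)
Definition potential (R : fieldType) N (e : rel 'I_N) (i j : 'I_N) : 'cV[R]_N :=
  invmx (laplacian R e + const_mx 1) *m curvec R i j.

(* effective resistance R_ij = v_i - v_j (unit resistors, unit current) *)
Definition eff_res (R : fieldType) N (e : rel 'I_N) (i j : 'I_N) : R :=
  potential R e i j i 0 - potential R e i j j 0.

Definition add_deg_kirchhoff (R : fieldType) N (e : rel 'I_N) : R :=
  \sum_(i < N) \sum_(j < N | (i < j)%N) (deg e i + deg e j)%:R * eff_res R e i j.

(* For every test potential x, Thomson's principle gives
   R_ij >= 2 (x_i - x_j) - (1/2) sum_{kl} a_kl (x_k - x_l)^2, with equality at the
   Kirchhoff potential.  The test potential x = t (e_i - e_j), with t optimal, yields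
   R_ij (d_i + d_j + 2 a_ij) >= 4.  Hence (d_i + d_j) R_ij >= 4 for non-adjacent i, j,
   and (d_i + d_j) R_ij >= 4 s / (s + 2) >= 4 d_1 / (1 + d_1) with s = d_i + d_j >= 2 d_1
   for adjacent ones.  Summing over the N (N - 1) / 2 pairs gives the bound. *)

From HB Require Import structures.
From mathcomp Require Import all_boot all_order all_algebra.
From mathcomp Require Import ring lra.
Set Implicit Arguments. Unset Strict Implicit. Unset Printing Implicit Defensive.
Import Order.TTheory GRing.Theory Num.Theory.

Lemma card_ltn_pairs N : \sum_(i < N) \sum_(j < N | i < j) 1 = 'C(N, 2).
Proof.
rewrite (exchange_big_dep predT) //= -bin2_sum big_mkord; apply: eq_bigr => j _.
by rewrite -(big_ord_widen N (fun=> 1) (ltnW (ltn_ord j))) sum1_card card_ord.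
Qed.

Lemma nedgesE N (e : rel 'I_N) :
  nedges e = \sum_(i < N) \sum_(j < N | i < j) e i j.
Proof.
rewrite /nedges -sum1_card pair_big_dep /= [RHS]big_mkcond [LHS]big_mkcond /=.
by apply: eq_bigr => -[i j] _; rewrite inE /=; case: (i < j)%N; case: (e i j).
Qed.

Lemma mindeg_le N (e : rel 'I_N) i : mindeg e <= deg e i.
Proof. exact: (bigmin_le (T := nat) N i (deg e)). Qed.

Lemma connected_deg_gt0 N (e : rel 'I_N) i :
  1 < N -> connected_graph e -> 0 < deg e i.
Proof.
move=> N_gt1 e_con.
have [j nij] : exists j : 'I_N, j != i.
  have [->|] := eqVneq i (Ordinal (ltnW N_gt1)); first by exists (Ordinal N_gt1).
  by exists (Ordinal (ltnW N_gt1)); rewrite eq_sym.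
case/connectP: (e_con i j) => -[|a p] /=; first by move=> _ eji; rewrite eji eqxx in nij.
by case/andP=> eia _ _; apply/card_gt0P; exists a; rewrite inE.
Qed.

Local Open Scope ring_scope.

Section Kirchhoff.
Variables (R : realFieldType) (N : nat) (e : rel 'I_N).
Hypotheses (e_sym : symmetric e) (e_irr : irreflexive e).

Definition lap (x : 'I_N -> R) k : R := \sum_l (e k l)%:R * (x k - x l).

Definition dirichlet (x y : 'I_N -> R) : R :=
  \sum_k \sum_l (e k l)%:R * ((x k - x l) * (y k - y l)).

Lemma natr_deg i : (deg e i)%:R = \sum_l (e i l)%:R :> R.
Proof.
rewrite /deg -sum1_card natr_sum big_mkcond /=; apply: eq_bigr => l _.
by rewrite inE; case: (e i l).
Qed.

Lemma laplacian_mulE (x : 'I_N -> R) k :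
  \sum_l laplacian R e k l * x l = lap x k.
Proof.
rewrite /lap [LHS](bigD1 k) //= [RHS](bigD1 k) //= e_irr subrr mulr0 add0r.
rewrite mxE eqxx natr_deg mulr_suml [X in X + _](bigD1 k) //= e_irr mul0r add0r.
rewrite -big_split /=; apply: eq_bigr => l /negbTE nlk.
by rewrite mxE eq_sym nlk; ring.
Qed.

Lemma dirichlet_lap (x y : 'I_N -> R) :
  dirichlet x y = 2 * \sum_k y k * lap x k.
Proof.
have -> : \sum_k y k * lap x k = \sum_k \sum_l (e k l)%:R * (y k * (x k - x l)).
  by apply: eq_bigr => k _; rewrite mulr_sumr; apply: eq_bigr => l _; ring.
rewrite mulr2n mulrDl mul1r {2}exchange_big -big_split /=.
apply: eq_bigr => k _; rewrite -big_split /=; apply: eq_bigr => l _.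
by rewrite (e_sym l k); ring.
Qed.

Lemma dirichletC (x y : 'I_N -> R) : dirichlet x y = dirichlet y x.
Proof. by apply: eq_bigr => k _; apply: eq_bigr => l _; rewrite (mulrC (x k - x l)). Qed.

Lemma dirichlet_ge0 (x : 'I_N -> R) : 0 <= dirichlet x x.
Proof.
apply: sumr_ge0 => k _; apply: sumr_ge0 => l _.
by rewrite -expr2 mulr_ge0 ?sqr_ge0.
Qed.

Lemma dirichletBB (x y : 'I_N -> R) :
  dirichlet (fun k => x k - y k) (fun k => x k - y k) =
  dirichlet x x - 2 * dirichlet x y + dirichlet y y.
Proof.
rewrite /dirichlet mulr_sumr -sumrB -big_split /=; apply: eq_bigr => k _.
by rewrite mulr_sumr -sumrB -big_split /=; apply: eq_bigr => l _; ring.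
Qed.

Lemma dirichletZZ (t : R) (x : 'I_N -> R) :
  dirichlet (fun k => t * x k) (fun k => t * x k) = t ^+ 2 * dirichlet x x.
Proof.
rewrite /dirichlet mulr_sumr; apply: eq_bigr => k _.
by rewrite mulr_sumr; apply: eq_bigr => l _; ring.
Qed.

Lemma sum_lap (x : 'I_N -> R) : \sum_k lap x k = 0.
Proof.
have /eqP : dirichlet x (fun=> 1) = 0.
  by rewrite /dirichlet big1 // => k _; rewrite big1 // => l _; rewrite subrr !mulr0.
rewrite dirichlet_lap mulf_eq0 pnatr_eq0 /= => /eqP sum0; rewrite -[RHS]sum0.
by apply: eq_bigr => k _; rewrite mul1r.
Qed.

Lemma dirichlet_eq0_const (x : 'I_N -> R) :
  connected_graph e -> dirichlet x x = 0 -> forall k l, x k = x l.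
Proof.
move=> e_con D0.
have edge_eq k l : e k l -> x k = x l.
  move=> ekl; have term_ge0 k' l' : 0 <= (e k' l')%:R * ((x k' - x l') * (x k' - x l')).
    by rewrite -expr2 mulr_ge0 ?sqr_ge0.
  have row_ge0 k' : 0 <= \sum_l' (e k' l')%:R * ((x k' - x l') * (x k' - x l')).
    by apply: sumr_ge0 => l' _.
  have row0 := psumr_eq0P (fun k' _ => row_ge0 k') D0 (i := k) isT.
  have /eqP := psumr_eq0P (fun l' _ => term_ge0 k l') row0 (i := l) isT.
  by rewrite ekl mul1r -expr2 sqrf_eq0 subr_eq0 => /eqP.
move=> k l; case/connectP: (e_con k l) => p; elim: p k => [|a p IHp] k /=.
  by move=> _ ->.
by case/andP=> eka pa lst; rewrite (edge_eq _ _ eka); apply: IHp.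
Qed.

Lemma sum_curvec (y : 'I_N -> R) i j : \sum_k y k * curvec R i j k 0 = y i - y j.
Proof.
under eq_bigr do rewrite mxE mulrBr.
rewrite sumrB; congr (_ - _).
  by rewrite (bigD1 i) //= eqxx mulr1 big1 ?addr0 // => k /negbTE ->; rewrite mulr0.
by rewrite (bigD1 j) //= eqxx mulr1 big1 ?addr0 // => k /negbTE ->; rewrite mulr0.
Qed.

Lemma lap_curvec i j k :
  lap (fun l => curvec R i j l 0) k =
  curvec R i j k 0 * (deg e k)%:R - ((e k i)%:R - (e k j)%:R).
Proof.
rewrite /lap natr_deg -(sum_curvec (fun l => (e k l)%:R)) mulr_sumr -sumrB.
by apply: eq_bigr => l _; rewrite !mxE; ring.
Qed.

Lemma dirichlet_curvec i j : i != j ->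
  dirichlet (fun k => curvec R i j k 0) (fun k => curvec R i j k 0) =
  2 * ((deg e i)%:R + (deg e j)%:R + 2 * (e i j)%:R).
Proof.
move=> nij; rewrite dirichlet_lap; under eq_bigr do rewrite mulrC.
rewrite sum_curvec !lap_curvec !mxE.
by rewrite !eqxx (negbTE nij) eq_sym (negbTE nij) !e_irr (e_sym j i) /=; ring.
Qed.

Hypotheses (e_con : connected_graph e) (N_gt0 : (0 < N)%N).

Let kirchhoff_mx : 'M[R]_N := laplacian R e + const_mx 1.

Lemma kirchhoff_mulE (x : 'I_N -> R) k :
  \sum_l kirchhoff_mx k l * x l = lap x k + \sum_l x l.
Proof.
rewrite -laplacian_mulE -big_split /=; apply: eq_bigr => l _.
by rewrite !mxE mulrDl mul1r.
Qed.

Lemma kirchhoff_solve (x c : 'I_N -> R) :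
  (forall k, \sum_l kirchhoff_mx k l * x l = c k) -> \sum_k c k = 0 ->
  \sum_l x l = 0 /\ forall k, lap x k = c k.
Proof.
move=> Mx_c sum_c0.
have sum_x0 : \sum_l x l = 0.
  have /eqP : \sum_k (lap x k + \sum_l x l) = 0.
    by rewrite -[RHS]sum_c0; apply: eq_bigr => k _; rewrite -Mx_c kirchhoff_mulE.
  rewrite big_split /= sum_lap // add0r sumr_const card_ord -mulr_natl.
  by rewrite mulf_eq0 pnatr_eq0 eqn0Ngt N_gt0 => /eqP.
by split=> // k; rewrite -Mx_c kirchhoff_mulE sum_x0 addr0.
Qed.

Lemma kirchhoff_unitmx : kirchhoff_mx \in unitmx.
Proof.
rewrite unitmxE unitfE; apply/negP => /det0P [w /negP w_neq0 wM0]; apply: w_neq0.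
pose x : 'I_N -> R := fun k => w 0 k.
have Mx0 k : \sum_l kirchhoff_mx k l * x l = 0.
  have := congr1 (fun A : 'rV_N => A 0 k) wM0; rewrite !mxE => wM0k.
  rewrite -[RHS]wM0k; apply: eq_bigr => l _; rewrite mulrC /kirchhoff_mx !mxE.
  rewrite (eq_sym l k) (e_sym l k).
  by case: eqP => // ->.
have [sum_x0 lap_x0] := kirchhoff_solve Mx0 (big1_eq _ _).
have /dirichlet_eq0_const x_const : dirichlet x x = 0.
  by rewrite dirichlet_lap // big1 ?mulr0 // => k _; rewrite lap_x0 mulr0.
apply/eqP/rowP => k; rewrite mxE.
move: sum_x0; under eq_bigr => l _ do rewrite (x_const e_con l k).
rewrite sumr_const card_ord -mulr_natl => /eqP.
by rewrite mulf_eq0 pnatr_eq0 eqn0Ngt N_gt0 => /eqP.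
Qed.

Lemma lap_potential i j k :
  lap (fun l => potential R e i j l 0) k = curvec R i j k 0.
Proof.
have Mv : kirchhoff_mx *m potential R e i j = curvec R i j.
  by rewrite /potential mulKVmx // kirchhoff_unitmx.
have sum_cur0 : \sum_k curvec R i j k 0 = 0.
  by have := sum_curvec (fun=> 1) i j; rewrite subrr; under eq_bigr do rewrite mul1r.
apply: (kirchhoff_solve _ sum_cur0).2 => l.
by have := congr1 (fun A : 'cV_N => A l 0) Mv; rewrite !mxE.
Qed.

Lemma eff_res_dual_ge i j (x : 'I_N -> R) :
  2 * (x i - x j) - dirichlet x x / 2 <= eff_res R e i j.
Proof.
pose v k := potential R e i j k 0.
have Dxv : dirichlet x v = 2 * (x i - x j).
  by rewrite dirichletC dirichlet_lap // -(sum_curvec x i j); under eq_bigr do rewrite lap_potential.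
have Dvv : dirichlet v v = 2 * (v i - v j).
  by rewrite dirichlet_lap // -(sum_curvec v i j); under eq_bigr do rewrite lap_potential.
have := dirichlet_ge0 (fun k => x k - v k).
by rewrite dirichletBB Dxv Dvv /eff_res -/(v i) -/(v j); lra.
Qed.

Lemma eff_res_deg_ge i j : i != j ->
  0 < (deg e i)%:R + (deg e j)%:R + 2 * (e i j)%:R :> R ->
  4 <= eff_res R e i j * ((deg e i)%:R + (deg e j)%:R + 2 * (e i j)%:R).
Proof.
set c := (_ + _ + _) => nij c_gt0.
have := eff_res_dual_ge i j (fun k => 2 / c * curvec R i j k 0).
rewrite dirichletZZ dirichlet_curvec // -/c !mxE !eqxx (negbTE nij) eq_sym (negbTE nij).
have -> : 2 * (2 / c * (1 - 0) - 2 / c * (0 - 1)) - (2 / c) ^+ 2 * (2 * c) / 2 = 4 / c.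
  by field; rewrite gt_eqF.
by rewrite ler_pdivrMr.
Qed.

Lemma deg_sum_eff_res_ge i j : (1 < N)%N -> i != j ->
  4 - 4 * (e i j)%:R / (1 + (mindeg e)%:R) <= (deg e i + deg e j)%:R * eff_res R e i j.
Proof.
move=> N_gt1 nij; set d1 : R := (mindeg e)%:R; set r := eff_res R e i j.
have d1_ge0 : 0 <= d1 by exact: ler0n.
have d1_le_i : d1 <= (deg e i)%:R by rewrite ler_nat mindeg_le.
have d1_le_j : d1 <= (deg e j)%:R by rewrite ler_nat mindeg_le.
have di_ge1 : 1 <= (deg e i)%:R :> R by rewrite ler1n connected_deg_gt0.
have dj_ge1 : 1 <= (deg e j)%:R :> R by rewrite ler1n connected_deg_gt0.
have := @eff_res_deg_ge i j nij; rewrite natrD -/r.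
case: (e i j) => /= [r_ge|]; last by rewrite !mulr0 mul0r !addr0 subr0 mulrC; apply; lra.
have {}r_ge : 4 <= r * ((deg e i)%:R + (deg e j)%:R + 2) by rewrite mulr1 in r_ge; apply: r_ge; lra.
have -> : 4 - 4 * 1 / (1 + d1) = 4 * d1 / (1 + d1) by field; lra.
rewrite ler_pdivrMr; last by lra.
have r_ge0 : 0 <= r by nra.
(* [d1 (r s - 4) >= 0] and [r (s - 2 d1) >= 0] for [s = d_i + d_j] add up to the goal. *)
have : 0 <= d1 * (r * ((deg e i)%:R + (deg e j)%:R + 2) - 4) by apply: mulr_ge0; lra.
have : 0 <= r * ((deg e i)%:R + (deg e j)%:R - 2 * d1) by apply: mulr_ge0; lra.
nra.
Qed.

End Kirchhoff.

Unset Implicit Arguments.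

Theorem corollary2 (R : realFieldType) (N : nat) (e : rel 'I_N) :
  (2 < N)%N -> simple_graph e -> connected_graph e ->
  add_deg_kirchhoff R e >=
    2 * N%:R * (N%:R - 1) - 4 * (nedges e)%:R / (1 + (mindeg e)%:R).
Proof.
move=> N_gt2 [e_sym e_irr] e_con.
have N_gt1 : (1 < N)%N by exact: ltnW.
have pairs2 : 2 * 'C(N, 2)%:R = N%:R * (N%:R - 1) :> R.
  by rewrite -natrM -mul_bin_diag bin1 -subn1 natrM natrB // ltnW.
have sum_pairs : \sum_(i < N) \sum_(j < N | (i < j)%N) 1 = 'C(N, 2)%:R :> R.
  by rewrite -card_ltn_pairs natr_sum; apply: eq_bigr => i _; rewrite natr_sum.
have sum_edges : \sum_(i < N) \sum_(j < N | (i < j)%N) (e i j)%:R = (nedges e)%:R :> R.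
  by rewrite nedgesE natr_sum; apply: eq_bigr => i _; rewrite natr_sum.
set d := 1 + (mindeg e)%:R.
have -> : 2 * N%:R * (N%:R - 1) - 4 * (nedges e)%:R / d =
          \sum_(i < N) \sum_(j < N | (i < j)%N) (4 - 4 * (e i j)%:R / d) :> R.
  rewrite -mulrA -pairs2 -sum_pairs -sum_edges !mulr_sumr !mulr_suml -sumrB.
  apply: eq_bigr => i _; rewrite !mulr_sumr !mulr_suml -sumrB; apply: eq_bigr => j _; ring.
apply: ler_sum => i _; apply: ler_sum => j lt_ij.
apply: deg_sum_eff_res_ge => //; first exact: ltnW.
by rewrite -(inj_eq val_inj) neq_ltn lt_ij.
Qed.
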